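(* Let $X=\{0,1\}^{\mathbb{Z}}$. Then the topological full group $\llbracket X\rrbracket$ is a subgroup of the Brin–Thompson group $2V$.
   Context: For a subshift $X\subseteq\Sigma^{\mathbb{Z}}$ with shift map $\sigma(x)_i=x_{i+1}$, the topological full group $\llbracket X\rrbracket$ is the group of all homeomorphisms $f:X\to X$ for which there is a continuous function $c:X\to\mathbb{Z}$ (the cocycle of $f$) with $f(x)=\sigma^{c(x)}(x)$ for all $x\in X$. Configurations of $\{0,1\}^{\mathbb{Z}}$ are written $x.y$ with $x\in\{0,1\}^{(-\infty,-1]}$, $y\in\{0,1\}^{\mathbb{N}}$, the coordinate right after the point being coordinate $0$. The Brin–Thompson group $2V$ is (here) the group of all homeomorphisms $f:\{0,1\}^{\mathbb{Z}}\to\{0,1\}^{\mathbb{Z}}$ for which there exist $n\in\mathbb{N}$ and a map assigning to each pair $(u,v)$ with $u\in\{0,1\}^n$, $v\in\{0,1\}^{n+1}$ a pair of finite words $(u',v')$, such that $f(xu.vy)=xu'.v'y$ for all left-infinite $x$ and right-infinite $y$. *)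

From Stdlib Require Import ZArith List Arith.
Import ListNotations.
Open Scope Z_scope.

Definition config := Z -> bool.

Definition agree (N : nat) (x y : config) : Prop :=
  forall i : Z, - Z.of_nat N <= i <= Z.of_nat N -> x i = y i.

(* Continuity for the product (Cantor) topology on {0,1}^Z, whose basis is
   the cylinder sets: every coordinate window of f y is determined by a
   coordinate window of y near x. *)
Definition continuous_map (f : config -> config) : Prop :=
  forall (x : config) (M : nat), exists N : nat,
    forall y : config, agree N x y -> agree M (f x) (f y).

(* Continuity of a map into the discrete space Z (= local constancy). *)
Definition continuous_cocycle (c : config -> Z) : Prop :=
  forall x : config, exists N : nat,
    forall y : config, agree N x y -> c y = c x.

Definition homeomorphism (f : config -> config) : Prop :=
  continuous_map f /\
  exists g : config -> config,
    continuous_map g /\ (forall x, g (f x) = x) /\ (forall x, f (g x) = x).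

Definition shift_pow (k : Z) (x : config) : config := fun i => x (i + k).

Definition in_TFG (f : config -> config) : Prop :=
  homeomorphism f /\
  exists c : config -> Z, continuous_cocycle c /\
    forall x, f x = shift_pow (c x) x.

(* A left-infinite word x in {0,1}^{(-oo,-1]} is represented by
   L : nat -> bool with L k = x_{-(k+1)}; a right-infinite word y in
   {0,1}^N by R : nat -> bool with R k = y_k. *)
Definition glue (L R : nat -> bool) : config :=
  fun i => if i <? 0 then L (Z.to_nat (- i - 1)) else R (Z.to_nat i).

(* Left-infinite word x followed by the finite word u (last letter of u at
   coordinate -1). *)
Definition lcat (L : nat -> bool) (u : list bool) : nat -> bool :=
  fun k => if (k <? length u)%nat then nth (length u - 1 - k)%nat u false
           else L (k - length u)%nat.

(* Finite word v followed by the right-infinite word y (first letter of v at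
   coordinate 0). *)
Definition rcat (v : list bool) (R : nat -> bool) : nat -> bool :=
  fun k => if (k <? length v)%nat then nth k v false else R (k - length v)%nat.

Definition in_2V (f : config -> config) : Prop :=
  homeomorphism f /\
  exists (n : nat) (tr : list bool -> list bool -> list bool * list bool),
    forall u v : list bool, length u = n -> length v = S n ->
      forall (L R : nat -> bool),
        f (glue (lcat L u) (rcat v R)) =
        glue (lcat L (fst (tr u v))) (rcat (snd (tr u v)) R).

(* Let f(x) = sigma^{c(x)}(x) with c continuous.  Two facts about c follow
   from the compactness of X:
   - c is uniformly continuous: c(x) only depends on the window x[-N, N]
     (proved by a Koenig-type argument: if no window size works on a
     cylinder, then it fails on one of its four sub-cylinders, and a nested
     sequence of such cylinders converges to a point of discontinuity);
   - c is bounded, |c| <= K, being a function of finitely many bits.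
   Take n >= max(N, K) and write a point as x u . v y with |u| = n,
   |v| = n + 1.  Then k = c(x u . v y) depends on u, v only, and shifting
   by k just moves the cut inside the word u v (as -n <= k <= n):
   sigma^k(x u . v y) = x u' . v' y where u' v' = u v and |u'| = n + k.
   This pair (u', v') is the transition table required by 2V. *)
From Stdlib Require Import ZArith List Arith Lia Classical
  FunctionalExtensionality IndefiniteDescription.
Import ListNotations.
Open Scope Z_scope.

Lemma agree_mono (M N : nat) (x y : config) :
  (M <= N)%nat -> agree N x y -> agree M x y.
Proof. intros HMN A i Hi. apply A. lia. Qed.

(* [cyl k z x]: x lies in the cylinder of radius k around z, i.e. agrees
   with z on the open window (-k, k); the cylinder of radius 0 is X. *)
Definition cyl (k : nat) (z x : config) : Prop :=
  forall i, - Z.of_nat k < i < Z.of_nat k -> z i = x i.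

Definition uniform_on (c : config -> Z) (k : nat) (z : config) : Prop :=
  exists M : nat, forall x y,
    cyl k z x -> cyl k z y -> agree M x y -> c x = c y.

Definition upd (z : config) (k : nat) (a b : bool) : config :=
  fun i => if Z.eq_dec i (Z.of_nat k) then b
           else if Z.eq_dec i (- Z.of_nat k) then a else z i.

Lemma cyl_upd (k : nat) (z y : config) (a b : bool) :
  cyl k z y -> y (- Z.of_nat k) = a -> y (Z.of_nat k) = b ->
  cyl (S k) (upd z k a b) y.
Proof.
  intros Hy Ha Hb i Hi. unfold upd.
  destruct (Z.eq_dec i (Z.of_nat k)) as [->|]; [auto|].
  destruct (Z.eq_dec i (- Z.of_nat k)) as [->|]; [auto|].
  apply Hy. lia.
Qed.

Lemma upd_in_cyl (k : nat) (z : config) (a b : bool) : cyl k z (upd z k a b).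
Proof.
  intros i Hi. unfold upd.
  destruct (Z.eq_dec i (Z.of_nat k)); [lia|].
  destruct (Z.eq_dec i (- Z.of_nat k)); [lia|]. reflexivity.
Qed.

Lemma uniform_on_split (c : config -> Z) (k : nat) (z : config) :
  (forall a b, uniform_on c (S k) (upd z k a b)) -> uniform_on c k z.
Proof.
  intros Hsub.
  destruct (Hsub false false) as [M1 H1]. destruct (Hsub false true) as [M2 H2].
  destruct (Hsub true false) as [M3 H3]. destruct (Hsub true true) as [M4 H4].
  set (M := Nat.max k (Nat.max M1 (Nat.max M2 (Nat.max M3 M4)))).
  exists M. intros x y Hx Hy Hxy.
  assert (Ha : y (- Z.of_nat k) = x (- Z.of_nat k)) by (symmetry; apply Hxy; lia).
  assert (Hb : y (Z.of_nat k) = x (Z.of_nat k)) by (symmetry; apply Hxy; lia).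
  pose proof (cyl_upd k z x _ _ Hx eq_refl eq_refl) as Cx.
  pose proof (cyl_upd k z y _ _ Hy Ha Hb) as Cy.
  destruct (x (- Z.of_nat k)), (x (Z.of_nat k)).
  - apply (H4 x y Cx Cy). eapply agree_mono; [|exact Hxy]. lia.
  - apply (H3 x y Cx Cy). eapply agree_mono; [|exact Hxy]. lia.
  - apply (H2 x y Cx Cy). eapply agree_mono; [|exact Hxy]. lia.
  - apply (H1 x y Cx Cy). eapply agree_mono; [|exact Hxy]. lia.
Qed.

Lemma not_uniform_on_refine (c : config -> Z) (k : nat) (z : config) :
  ~ uniform_on c k z ->
  exists z', cyl k z z' /\ ~ uniform_on c (S k) z'.
Proof.
  intros Hn. apply NNPP. intros Hnone. apply Hn, uniform_on_split.
  intros a b. apply NNPP. intros Hab. apply Hnone.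
  exists (upd z k a b). split; [apply upd_in_cyl | exact Hab].
Qed.

Fixpoint iterate (next : nat -> config -> config) (z0 : config) (k : nat)
  : config :=
  match k with O => z0 | S k => next k (iterate next z0 k) end.

Lemma nested_cylinders (P : nat -> config -> Prop) (z0 : config) :
  (forall k z, P k z -> exists z', cyl k z z' /\ P (S k) z') ->
  P 0%nat z0 ->
  exists zl, forall k, exists z, P k z /\ cyl k z zl.
Proof.
  intros Hstep H0.
  assert (Hnext : forall k z, exists z', P k z -> cyl k z z' /\ P (S k) z').
  { intros k z. destruct (classic (P k z)) as [Hp|Hp].
    - destruct (Hstep k z Hp) as [z' Hz']. exists z'; auto.
    - exists z; tauto. }
  set (next := fun k z =>
         proj1_sig (constructive_indefinite_description _ (Hnext k z))).
  assert (Hspec : forall k z, P k z -> cyl k z (next k z) /\ P (S k) (next k z))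
    by (intros k z; exact (proj2_sig (constructive_indefinite_description _ (Hnext k z)))).
  set (s := iterate next z0).
  assert (Hs : forall k, P k (s k)).
  { induction k as [|k IH]; [exact H0 | exact (proj2 (Hspec _ _ IH))]. }
  assert (Hnest : forall k m, cyl k (s k) (s (k + m)%nat)).
  { intros k m. induction m as [|m IH].
    - rewrite Nat.add_0_r. intros i _. reflexivity.
    - rewrite Nat.add_succ_r. intros i Hi. rewrite (IH i Hi).
      apply (proj1 (Hspec _ _ (Hs _))). lia. }
  (* The limit point reads coordinate i off a cylinder containing i. *)
  exists (fun i => s (S (Z.to_nat (Z.abs i))) i).
  intro k. exists (s k). split; [apply Hs|]. intros i Hi.
  set (j := S (Z.to_nat (Z.abs i))).
  pose proof (Hnest j (k - j)%nat i) as E.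
  replace (j + (k - j))%nat with k in E by lia.
  symmetry. apply E. lia.
Qed.

Lemma continuous_cocycle_uniform (c : config -> Z) :
  continuous_cocycle c -> exists N, forall x y, agree N x y -> c x = c y.
Proof.
  intros Hc. apply NNPP. intros Hn.
  assert (H0 : ~ uniform_on c 0 (fun _ => false)).
  { intros [M HM]. apply Hn. exists M. intros x y.
    apply HM; intros i Hi; lia. }
  destruct (nested_cylinders _ _ (not_uniform_on_refine c) H0) as [zl Hzl].
  destruct (Hc zl) as [N0 HN0].
  destruct (Hzl (S N0)) as [z [Hz Hzzl]].
  apply Hz. exists 0%nat. intros x y Hx Hy _.
  assert (Ax : forall w, cyl (S N0) z w -> c w = c zl).
  { intros w Hw. apply HN0. intros i Hi.
    rewrite <- (Hzzl i) by lia. apply Hw. lia. }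
  rewrite (Ax x Hx), (Ax y Hy). reflexivity.
Qed.

(* A Z-valued function of finitely many coordinates takes finitely many
   values, hence is bounded. *)
Lemma finitely_determined_bounded (S : list Z) (c : config -> Z) :
  (forall x y, (forall i, In i S -> x i = y i) -> c x = c y) ->
  exists K, forall x, Z.abs (c x) <= K.
Proof.
  revert c. induction S as [|j S IH]; intros c Hc.
  - exists (Z.abs (c (fun _ => false))). intro x.
    rewrite (Hc x (fun _ => false)); [lia | intros i []].
  - set (setb := fun (b : bool) (x : config) i =>
                   if Z.eq_dec i j then b else x i).
    assert (HB : forall b, exists K, forall x, Z.abs (c (setb b x)) <= K).
    { intro b. apply (IH (fun x => c (setb b x))). intros x y Hxy. apply Hc.
      intros i [Hi|Hi]; unfold setb; destruct (Z.eq_dec i j); auto; lia. }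
    destruct (HB false) as [K0 H0]. destruct (HB true) as [K1 H1].
    exists (Z.max K0 K1). intro x.
    rewrite (Hc x (setb (x j) x)).
    + destruct (x j); [specialize (H1 x) | specialize (H0 x)]; lia.
    + intros i _. unfold setb. destruct (Z.eq_dec i j); subst; auto.
Qed.

Lemma uniform_cocycle_bounded (c : config -> Z) (N : nat) :
  (forall x y, agree N x y -> c x = c y) ->
  exists K, forall x, Z.abs (c x) <= K.
Proof.
  intro H.
  apply (finitely_determined_bounded
           (map (fun m => Z.of_nat m - Z.of_nat N) (seq 0 (2 * N + 1)))).
  intros x y Hxy. apply H. intros i Hi. apply Hxy. apply in_map_iff.
  exists (Z.to_nat (i + Z.of_nat N)). split; [lia|]. apply in_seq. lia.
Qed.

Definition prepend (b : bool) (s : nat -> bool) : nat -> bool :=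
  fun k => match k with O => b | S k => s k end.

Lemma shift_one_glue (A B : nat -> bool) :
  shift_pow 1 (glue A B) = glue (prepend (B 0%nat) A) (fun k => B (S k)).
Proof.
  apply functional_extensionality. intro i. unfold shift_pow, glue, prepend.
  destruct (Z.ltb_spec (i + 1) 0), (Z.ltb_spec i 0); try lia.
  - replace (Z.to_nat (- i - 1)) with (S (Z.to_nat (- (i + 1) - 1))) by lia.
    reflexivity.
  - replace i with (-1) by lia. reflexivity.
  - f_equal. lia.
Qed.

Lemma rcat_cons (b : bool) (v : list bool) (R : nat -> bool) :
  rcat (b :: v) R = prepend b (rcat v R).
Proof. apply functional_extensionality. intros [|k]; reflexivity. Qed.

Lemma lcat_snoc (L : nat -> bool) (u : list bool) (b : bool) :
  lcat L (u ++ [b]) = prepend b (lcat L u).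
Proof.
  apply functional_extensionality. intro k. unfold lcat, prepend.
  rewrite length_app. simpl length. destruct k as [|k].
  - rewrite (proj2 (Nat.ltb_lt _ _)) by lia.
    replace (length u + 1 - 1 - 0)%nat with (length u) by lia.
    rewrite nth_middle. reflexivity.
  - destruct (Nat.ltb_spec (S k) (length u + 1)), (Nat.ltb_spec k (length u));
      try lia.
    + rewrite app_nth1 by lia. f_equal. lia.
    + f_equal. lia.
Qed.

Lemma shift_pow_add (a b : Z) (x : config) :
  shift_pow a (shift_pow b x) = shift_pow (a + b) x.
Proof.
  apply functional_extensionality. intro i. unfold shift_pow. f_equal. lia.
Qed.

Lemma shift_past_word (L R : nat -> bool) (u w v : list bool) :
  shift_pow (Z.of_nat (length w)) (glue (lcat L u) (rcat (w ++ v) R)) =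
  glue (lcat L (u ++ w)) (rcat v R).
Proof.
  revert u. induction w as [|b w IH]; intro u.
  - simpl length. rewrite app_nil_l, app_nil_r.
    apply functional_extensionality. intro i.
    unfold shift_pow. rewrite Z.add_0_r. reflexivity.
  - simpl length. rewrite Nat2Z.inj_succ, <- Z.add_1_r, <- shift_pow_add.
    rewrite <- app_comm_cons, shift_one_glue, rcat_cons. simpl.
    rewrite <- lcat_snoc, IH, <- app_assoc. reflexivity.
Qed.

Definition reblock (k : Z) (u v : list bool) : list bool * list bool :=
  let p := Z.to_nat (Z.of_nat (length u) + k) in
  (firstn p (u ++ v), skipn p (u ++ v)).

Lemma shift_reblock (L R : nat -> bool) (u v : list bool) (k : Z) :
  0 <= Z.of_nat (length u) + k <= Z.of_nat (length u + length v) ->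
  shift_pow k (glue (lcat L u) (rcat v R)) =
  glue (lcat L (fst (reblock k u v))) (rcat (snd (reblock k u v)) R).
Proof.
  intros Hk. unfold reblock. simpl fst. simpl snd.
  set (p := Z.to_nat (Z.of_nat (length u) + k)).
  (* Both sides are shifts of the point with cut just before u v. *)
  set (Y := glue (lcat L []) (rcat (u ++ v) R)).
  assert (HX : glue (lcat L u) (rcat v R) = shift_pow (Z.of_nat (length u)) Y)
    by (symmetry; exact (shift_past_word L R [] u v)).
  assert (Hp : length (firstn p (u ++ v)) = p)
    by (apply firstn_length_le; rewrite length_app; lia).
  pose proof (shift_past_word L R [] (firstn p (u ++ v)) (skipn p (u ++ v)))
    as Hcut.
  rewrite app_nil_l, firstn_skipn, Hp in Hcut.
  rewrite HX, shift_pow_add, <- Hcut. f_equal. lia.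
Qed.

Lemma glue_agree_center (L L' R R' : nat -> bool) (u v : list bool) :
  (length u < length v)%nat ->
  agree (length u) (glue (lcat L u) (rcat v R)) (glue (lcat L' u) (rcat v R')).
Proof.
  intros Huv i Hi. unfold glue, lcat, rcat.
  destruct (Z.ltb_spec i 0).
  - rewrite (proj2 (Nat.ltb_lt _ _)) by lia. reflexivity.
  - rewrite (proj2 (Nat.ltb_lt _ _)) by lia. reflexivity.
Qed.

Theorem mainTheorem1 : forall f : config -> config, in_TFG f -> in_2V f.
Proof.
  intros f [Hhomeo [c [Hc Hf]]]. split; [exact Hhomeo|].
  destruct (continuous_cocycle_uniform c Hc) as [N HN].
  destruct (uniform_cocycle_bounded c N HN) as [K HK].
  set (L0 := fun _ : nat => false).
  (* The shift amount read off the central block u v. *)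
  set (amount := fun u v => c (glue (lcat L0 u) (rcat v L0))).
  exists (Nat.max N (Z.to_nat K)), (fun u v => reblock (amount u v) u v).
  intros u v Hu Hv L R.
  assert (Hamount : c (glue (lcat L u) (rcat v R)) = amount u v).
  { apply HN, (agree_mono _ (length u)); [lia|].
    apply glue_agree_center. lia. }
  rewrite Hf, Hamount. apply shift_reblock.
  specialize (HK (glue (lcat L0 u) (rcat v L0))). unfold amount. lia.
Qed.
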